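(* Let $R$ be a ring and let $\mathcal{S}$ be a sublattice of the lattice $\mathbb{I}(R)$ of two-sided ideals of $R$ which is closed under arbitrary intersections and contains $\{0\}$ and $R$. Suppose that for each $I\in\mathcal{S}$ we have $I=\ker(\{\mathfrak{p}\in\mathrm{Spec}_{\mathcal{S}}(R):\mathfrak{p}\supseteq I\})$. Let $\mathbb{O}(\mathrm{Spec}_{\mathcal{S}}(R))$ be the lattice of open subsets of $\mathrm{Spec}_{\mathcal{S}}(R)$ in the Jacobson topology, and define $\phi\colon \mathbb{O}(\mathrm{Spec}_{\mathcal{S}}(R))\to\mathcal{S}$ by $\phi(U)=\ker(U^c)$. Then $\phi$ is a lattice isomorphism.
   Context: An ideal $P\in\mathcal{S}$ is $\mathcal{S}$-prime if $P\neq R$ and for all $I,J\in\mathcal{S}$, $IJ\subseteq P$ implies $I\subseteq P$ or $J\subseteq P$; $\mathrm{Spec}_{\mathcal{S}}(R)$ is the set of $\mathcal{S}$-prime ideals. For $T\subseteq\mathrm{Spec}_{\mathcal{S}}(R)$, $\ker(T)=\bigcap_{\mathfrak{p}\in T}\mathfrak{p}$ (with $\ker(\emptyset)=R$), and $U^c$ denotes complement in $\mathrm{Spec}_{\mathcal{S}}(R)$. The Jacobson topology is the topology whose closure operation is $\overline{T}=\{\mathfrak{p}\in\mathrm{Spec}_{\mathcal{S}}(R):\mathfrak{p}\supseteq\ker(T)\}$. *)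

From mathcomp Require Import all_boot all_algebra.
From mathcomp Require Import boolp classical_sets.
Set Implicit Arguments. Unset Strict Implicit. Unset Printing Implicit Defensive.
Import GRing.Theory.
Local Open Scope ring_scope.
Local Open Scope classical_set_scope.

Section Ideals.
Variable R : pzRingType.

Definition is_ideal (I : set R) : Prop :=
  I 0 /\ (forall x y, I x -> I y -> I (x - y)) /\
  (forall r x, I x -> I (r * x)) /\ (forall r x, I x -> I (x * r)).

(* product of ideals: the ideal generated by all products a*b, a in I, b in J *)
Definition ideal_mul (I J : set R) : set R :=
  fun x => forall K, is_ideal K -> (forall a b, I a -> J b -> K (a * b)) -> K x.

Definition ideal_add (I J : set R) : set R :=
  fun x => exists a b, I a /\ J b /\ x = a + b.

(* intersection of a family of ideals, with the empty family giving R *)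
Definition bigcap_ideals (F : set (set R)) : set R :=
  fun x => forall I, F I -> I x.

Variable S : set (set R).

Definition S_prime (P : set R) : Prop :=
  S P /\ P <> setT /\
  (forall I J, S I -> S J -> ideal_mul I J `<=` P -> I `<=` P \/ J `<=` P).

Definition SpecS : set (set R) := S_prime.

Definition kerS (T : set (set R)) : set R := bigcap_ideals T.

Definition jclosure (T : set (set R)) : set (set R) :=
  fun p => SpecS p /\ kerS T `<=` p.

Definition jopen (U : set (set R)) : Prop :=
  U `<=` SpecS /\ jclosure (SpecS `\` U) = SpecS `\` U.

Definition phi (U : set (set R)) : set R := kerS (SpecS `\` U).

End Ideals.

From mathcomp Require Import all_boot all_algebra.
From mathcomp Require Import boolp classical_sets.
Local Open Scope ring_scope.
Local Open Scope classical_set_scope.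
Import GRing.Theory.

(* The closed sets of the Jacobson topology are exactly the sets
   V(I) = {p | I <= p}, and the hypothesis I = ker V(I) makes I |-> V(I) an
   order-reversing bijection from S onto the closed sets, with inverse ker.
   Passing to complements, phi is an order-preserving bijection onto S;
   it turns unions of open sets into sums because V(I + J) = V(I) `&` V(J). *)

Lemma setD_injr {T : Type} {A U V : set T} :
  U `<=` A -> V `<=` A -> A `\` U = A `\` V -> U = V.
Proof. by move=> UA VA AUV; rewrite -(setIidr UA) -(setIidr VA) -!setDD AUV. Qed.

Lemma ideal_add_subset {R : pzRingType} {I J P : set R} :
  is_ideal I -> is_ideal J -> is_ideal P ->
  ideal_add I J `<=` P <-> I `<=` P /\ J `<=` P.
Proof.
move=> [I0 _] [J0 _] [P0 [PB _]]; split.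
  move=> IJP; split => x Px; apply: IJP.
    by exists x, 0; rewrite addr0.
  by exists 0, x; rewrite add0r.
move=> [IP JP] _ [a [b [Ia [Jb ->]]]].
have -> : a + b = a - (0 - b) by rewrite sub0r opprK.
exact: PB (IP _ Ia) (PB _ _ P0 (JP _ Jb)).
Qed.

Lemma kerS_setU {R : pzRingType} (A B : set (set R)) :
  kerS (A `|` B) = kerS A `&` kerS B.
Proof.
apply/seteqP; split => x.
  by move=> ABx; split => I ?; apply: ABx; [left|right].
by move=> [Ax Bx] I [/Ax|/Bx].
Qed.

Section JacobsonSpectrum.
Context {R : pzRingType} (S : set (set R)).

Definition primes_above (I : set R) : set (set R) :=
  [set p | SpecS S p /\ I `<=` p].

Lemma primes_above_sub I : primes_above I `<=` SpecS S.
Proof. by move=> p []. Qed.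

Lemma jclosureE T : jclosure S T = primes_above (kerS T).
Proof. by []. Qed.

Lemma jopen_complement U : jopen S U -> SpecS S `\` U = primes_above (phi S U).
Proof. by move=> [_ closedU]; rewrite -closedU. Qed.

Lemma phi_setI U V : phi S (U `&` V) = phi S U `&` phi S V.
Proof. by rewrite /phi setDIr kerS_setU. Qed.

Hypothesis S_ideals : forall I, S I -> is_ideal I.
Hypothesis S_bigcap : forall F : set (set R), F `<=` S -> S (bigcap_ideals F).
Hypothesis S_semiprime : forall I, S I -> I = kerS (primes_above I).

Lemma phi_in_S U : S (phi S U).
Proof. by apply: S_bigcap => p [[]]. Qed.

Lemma phi_inj U V : jopen S U -> jopen S V -> phi S U = phi S V -> U = V.
Proof.
move=> oU oV phiUV; apply: (setD_injr oU.1 oV.1).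
by rewrite !jopen_complement // phiUV.
Qed.

Lemma jopen_primes_not_above I : S I -> jopen S (SpecS S `\` primes_above I).
Proof.
move=> SI; split; first exact: subDsetl.
by rewrite setDD (setIidr (primes_above_sub I)) jclosureE -S_semiprime.
Qed.

Lemma phi_primes_not_above I : S I -> phi S (SpecS S `\` primes_above I) = I.
Proof.
by move=> SI; rewrite /phi setDD (setIidr (primes_above_sub I)) -S_semiprime.
Qed.

Lemma primes_above_add I J : S I -> S J ->
  primes_above (ideal_add I J) = primes_above I `&` primes_above J.
Proof.
move=> /S_ideals iI /S_ideals iJ; apply/seteqP; split => p.
  move=> [Sp /(ideal_add_subset iI iJ (S_ideals _ Sp.1)) [Ip Jp]].
  by split; split.
move=> [[Sp Ip] [_ Jp]]; split => //.
exact/(ideal_add_subset iI iJ (S_ideals _ Sp.1)).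
Qed.

Hypothesis S_join : forall I J, S I -> S J -> S (ideal_add I J).

Lemma phi_setU U V : jopen S U -> jopen S V ->
  phi S (U `|` V) = ideal_add (phi S U) (phi S V).
Proof.
move=> oU oV; have SU := phi_in_S U; have SV := phi_in_S V.
rewrite [LHS]/phi setDUr !jopen_complement // -primes_above_add //.
exact/esym/S_semiprime/S_join.
Qed.

End JacobsonSpectrum.

Theorem theorem3p4 (R : pzRingType) (S : set (set R))
  (S_ideals : forall I, S I -> is_ideal I)
  (S_meet : forall I J, S I -> S J -> S (I `&` J))
  (S_join : forall I J, S I -> S J -> S (ideal_add I J))
  (S_bigcap : forall F : set (set R), F `<=` S -> S (bigcap_ideals F))
  (S_zero : S [set 0])
  (S_top : S setT)
  (S_semiprime : forall I, S I ->
     I = kerS (fun p => SpecS S p /\ I `<=` p)) :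
  (* phi maps open sets into S *)
  (forall U, jopen S U -> S (phi S U)) /\
  (* phi is injective on open sets *)
  (forall U V, jopen S U -> jopen S V -> phi S U = phi S V -> U = V) /\
  (* phi is onto S *)
  (forall I, S I -> exists U, jopen S U /\ phi S U = I) /\
  (* phi preserves meets (U `&` V  |->  intersection) *)
  (forall U V, jopen S U -> jopen S V -> phi S (U `&` V) = phi S U `&` phi S V) /\
  (* phi preserves joins (U `|` V  |->  ideal sum) *)
  (forall U V, jopen S U -> jopen S V ->
     phi S (U `|` V) = ideal_add (phi S U) (phi S V)).
Proof.
split; first by move=> U _; exact: phi_in_S.
split; first exact: phi_inj.
split.
  move=> I SI; exists (SpecS S `\` primes_above S I).
  by split; [exact: jopen_primes_not_above | exact: phi_primes_not_above].
split; first by move=> U V _ _; exact: phi_setI.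
exact: phi_setU.
Qed.
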